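(* Let $x\in\mathbb X$ and $B\Subset\mathbb X$. Then \[ \prod_{Y\in\mathbf F(x)}\max\Big\{|W(Y\mid B)|,\ 1+|W(Y\mid B)-1|\alpha^S\ \Big|\ \varnothing\neq S\subset Y\setminus\{x\}\Big\} \le\mathbf 1_{\{x\notin B\}}\prod_{X\in\mathbf F(x)}\max\Big\{|W(X)|,\ 1+|W(X)-1|\alpha^S\ \Big|\ \varnothing\neq S\subset X\setminus\{x\}\Big\}. \]
   Context: $\mathbb X$ is a finite or countably infinite set; $X\Subset\mathbb X$ means finite subset; $\mathbf F$ is the set of finite subsets of $\mathbb X$ and $\mathbf F(x)=\{X\Subset\mathbb X\mid x\in X\}$. Fix $W:\mathbf F\to\mathbb C$, $r:\mathbb X\to[0,1)$, $\alpha=\frac r{1-r}$, and write $\alpha^S=\prod_{s\in S}\alpha(s)$. The conditional interaction is $W(X\mid B)=\prod_{C\subset B}W(X\cup C)$ if $X\cap B=\varnothing$, $W(X\mid B)=0$ if $X=\{y\}$ with $y\in B$, and $W(X\mid B)=1$ otherwise. A maximum $\max\{a,\ b_S\mid S\in\mathcal S\}$ denotes the maximum of $a$ together with all $b_S$, $S\in\mathcal S$ (it equals $a$ if $\mathcal S=\varnothing$). Products of nonnegative numbers over infinite index sets are understood in $[0,\infty]$. *)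

From HB Require Import structures.
From mathcomp Require Import all_boot all_order all_algebra.
From mathcomp Require Import finmap.
From mathcomp Require Import all_classical all_reals ereal.
From mathcomp Require Import complex.
Set Implicit Arguments. Unset Strict Implicit. Unset Printing Implicit Defensive.
Import Order.TTheory GRing.Theory Num.Theory.
Local Open Scope fset_scope.
Local Open Scope ring_scope.

Definition cabs (R : realType) (z : R[i]) : R := complex.Re `|z|.

Definition alpha (T : choiceType) (R : realType) (r : T -> R) (s : T) : R :=
  r s / (1 - r s).
Definition alphaS (T : choiceType) (R : realType) (r : T -> R) (S : {fset T}) : R :=
  \prod_(s <- S) alpha r s.

Definition condW (T : choiceType) (R : realType) (W : {fset T} -> R[i])
    (X B : {fset T}) : R[i] :=
  if X `&` B == fset0 then \prod_(C <- fpowerset B) W (X `|` C)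
  else if has (fun y => X == [fset y]) B then 0 else 1.

Definition maxfac (T : choiceType) (R : realType) (r : T -> R) (x : T)
    (Y : {fset T}) (w : R[i]) : R :=
  \big[Num.max/cabs w]_(S <- fpowerset (Y `\ x) | S != fset0)
     (1 + cabs (w - 1) * alphaS r S).

(* product over the set {Y | P Y} of finite subsets of nonnegative extended
   reals, understood in [0, +oo]: the factors < 1 contribute the infimum of
   their finite partial products, the factors >= 1 the supremum of theirs
   (with 0 * +oo = 0). *)
Local Open Scope ereal_scope.
Definition eprod (T : choiceType) (R : realType) (P : pred {fset T})
    (f : {fset T} -> \bar R) : \bar R :=
  ereal_inf [set \prod_(Y <- A | P Y && (f Y < 1)) f Y | A in [set: {fset {fset T}}]]
  * ereal_sup [set \prod_(Y <- A | P Y && (1 <= f Y)) f Y | A in [set: {fset {fset T}}]].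

From HB Require Import structures.
From mathcomp Require Import all_boot all_order all_algebra.
From mathcomp Require Import finmap.
From mathcomp Require Import all_classical all_reals ereal.
From mathcomp Require Import complex.
From mathcomp Require Import ring.
Import Order.TTheory GRing.Theory Num.Theory.
Local Open Scope fset_scope.
Local Open Scope ring_scope.

(* For [x \in Y] every factor is at least 1 except possibly the one at
   [Y = {x}], so each product over [F(x)] in [0, +oo] is the supremum of its
   finite partial products over families containing [{x}].  If [x \in B], the
   left factor at [{x}] vanishes because [W({x} | B) = 0].  Otherwise a left
   factor at [Y] with [Y ∩ B <> ∅] is at most 1, and for [Y ∩ B = ∅] it is at
   most the product of the right factors at the sets [Y ∪ C], [C ⊆ B]: indeed
   [W(Y | B)] is the product of the [W(Y ∪ C)], and
   [1 + |∏ w_i - 1| t <= ∏ m_i] as soon as [|w_i| <= m_i] and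
   [1 + |w_i - 1| t <= m_i].  As [(Y, C) ↦ Y ∪ C] is injective, each partial
   product on the left is dominated by one on the right. *)

Section ComplexModulus.
Context {R : realType}.
Implicit Types z w : R[i].

Lemma cabsE z : cabs z = Normc.normc z.
Proof. by case: z. Qed.

Lemma cabs_ge0 z : 0 <= cabs z.
Proof. by rewrite cabsE; case: z => a b /=; rewrite sqrtr_ge0. Qed.

Lemma cabs0 : cabs (0 : R[i]) = 0.
Proof. by rewrite cabsE Normc.normc0. Qed.

Lemma cabs1 : cabs (1 : R[i]) = 1.
Proof. by rewrite cabsE Normc.normc1. Qed.

Lemma cabsM z w : cabs (z * w) = cabs z * cabs w.
Proof. by rewrite !cabsE Normc.normcM. Qed.

Lemma cabsD z w : cabs (z + w) <= cabs z + cabs w.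
Proof. by rewrite !cabsE le_normcD. Qed.

Lemma cabs_prod (I : Type) (s : seq I) (F : I -> R[i]) :
  cabs (\prod_(i <- s) F i) = \prod_(i <- s) cabs (F i).
Proof. exact: (big_morph _ cabsM cabs1). Qed.

Lemma cabs_prod_sub1_le (I : Type) (s : seq I) (w : I -> R[i]) (m : I -> R)
    (t : R) :
  0 <= t -> (forall i, cabs (w i) <= m i) ->
  (forall i, 1 + cabs (w i - 1) * t <= m i) ->
  1 + cabs (\prod_(i <- s) w i - 1) * t <= \prod_(i <- s) m i.
Proof.
move=> t_ge0 w_le dev_le; elim: s => [|i s IHs].
  by rewrite !big_nil subrr cabs0 mul0r addr0.
rewrite !big_cons; set v := \prod_(j <- s) w j in IHs *.
set M := \prod_(j <- s) m j in IHs *.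
have vdev : cabs (v - 1) * t <= M - 1 by rewrite lerBrDl.
have wdev : cabs (w i - 1) * t <= m i - 1 by rewrite lerBrDl.
have dev_split :
    cabs (w i * v - 1) <= cabs (w i) * cabs (v - 1) + cabs (w i - 1).
  have -> : w i * v - 1 = w i * (v - 1) + (w i - 1).
    by rewrite mulrBr mulr1 addrA subrK.
  by rewrite -cabsM cabsD.
have : cabs (w i * v - 1) * t <= m i * (M - 1) + (m i - 1).
  apply: le_trans (ler_wpM2r t_ge0 dev_split) _.
  rewrite mulrDl -mulrA; apply: lerD wdev.
  by apply: ler_pM; rewrite ?mulr_ge0 ?cabs_ge0.
have -> : m i * M = 1 + (m i * (M - 1) + (m i - 1)) by ring.
by rewrite lerD2l.
Qed.

End ComplexModulus.

Section MaxFactor.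
Context {T : choiceType} {R : realType} {r : T -> R} {x : T}.
Hypothesis r_bounds : forall s, 0 <= r s < 1.
Implicit Types (Y Z S : {fset T}) (w : R[i]).

Lemma alphaS_ge0 S : 0 <= alphaS r S.
Proof.
apply: prodr_ge0 => s _; have /andP[r_ge0 r_lt1] := r_bounds s.
by rewrite divr_ge0 // subr_ge0 ltW.
Qed.

Lemma maxfac_ge_cabs Y w : cabs w <= maxfac r x Y w.
Proof.
by rewrite /maxfac; elim/big_rec: _ => // S M _ le_M; rewrite le_max le_M orbT.
Qed.

Lemma maxfac_ge0 Y w : 0 <= maxfac r x Y w.
Proof. exact: le_trans (cabs_ge0 w) (maxfac_ge_cabs Y w). Qed.

Lemma maxfac_ge_alphaS Y w S : S `<=` Y `\ x -> S != fset0 ->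
  1 + cabs (w - 1) * alphaS r S <= maxfac r x Y w.
Proof.
move=> SY S_neq0.
by apply: (le_bigmax_seq _ S (fun S => S != fset0)); rewrite ?fpowersetE.
Qed.

Lemma maxfac_le Y w M : cabs w <= M ->
  (forall S, S `<=` Y `\ x -> S != fset0 -> 1 + cabs (w - 1) * alphaS r S <= M) ->
  maxfac r x Y w <= M.
Proof.
move=> w_le S_le; rewrite /maxfac big_seq_cond; apply: bigmax_le => // S.
by rewrite fpowersetE => /andP[]; apply: S_le.
Qed.

Lemma maxfac_ge1 Y w : x \in Y -> Y != [fset x] -> 1 <= maxfac r x Y w.
Proof.
move=> xY Y_neq1; have Yx_neq0 : Y `\ x != fset0.
  by apply: contra Y_neq1 => /eqP Yx0; rewrite -(fsetD1K xY) Yx0 fsetU0.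
have := maxfac_ge_alphaS Y w (Y `\ x) (fsubset_refl _) Yx_neq0; apply: le_trans.
by rewrite lerDl mulr_ge0 ?cabs_ge0 ?alphaS_ge0.
Qed.

Lemma maxfac_prod_le (I : Type) (s : seq I) Y (Z : I -> {fset T})
    (w : I -> R[i]) :
  (forall i, Y `<=` Z i) ->
  maxfac r x Y (\prod_(i <- s) w i) <= \prod_(i <- s) maxfac r x (Z i) (w i).
Proof.
move=> YZ; apply: maxfac_le => [|S SY S_neq0].
  by rewrite cabs_prod ler_prod // => i _; rewrite cabs_ge0 maxfac_ge_cabs.
apply: cabs_prod_sub1_le (alphaS_ge0 S) _ _ => i; first exact: maxfac_ge_cabs.
by apply: maxfac_ge_alphaS S_neq0; apply: fsubset_trans SY (fsetSD _ (YZ i)).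
Qed.

End MaxFactor.

Section PointedProduct.
Variables (T : choiceType) (R : realType).
Implicit Types (Y : {fset T}) (A : {fset {fset T}}).
Implicit Types (P : pred {fset T}) (h : {fset T} -> R).

Lemma eprod_EFin P h :
  eprod P (fun Y => (h Y)%:E) =
  (ereal_inf [set (\prod_(Y <- A | P Y) Num.min (h Y) 1)%:E
              | A in [set: {fset {fset T}}]] *
   ereal_sup [set (\prod_(Y <- A | P Y) Num.max 1 (h Y))%:E
              | A in [set: {fset {fset T}}]])%E.
Proof.
rewrite /eprod; congr (ereal_inf _ * ereal_sup _)%E; apply: eq_imagel => A _;
  rewrite -prodEFin big_mkcondr /=; apply: eq_bigr => Y _.
  by rewrite lte_fin minElt; case: ifP.
by rewrite lee_fin maxEle; case: ifP.
Qed.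

Variables (x : T) (h : {fset T} -> R).
Hypothesis h_ge0 : forall Y, 0 <= h Y.
Hypothesis h_ge1 : forall Y, x \in Y -> Y != [fset x] -> 1 <= h Y.
Let m := Num.min (h [fset x]) 1.

Lemma prod_min1 A :
  \prod_(Y <- A | x \in Y) Num.min (h Y) 1 = if [fset x] \in A then m else 1.
Proof.
rewrite big_mkcond /=; case: ifPn => [xA|xNA].
  rewrite (big_fsetD1 _ xA) fset11 big1_fset /= ?mulr1 // => Y.
  rewrite in_fsetD1 => /andP[Y_neq1 _] _.
  by case: ifP => // xY; apply/min_r/h_ge1.
rewrite big1_fset // => Y YA _; case: ifP => // xY.
by apply/min_r/h_ge1 => //; apply: contraNneq xNA => <-.
Qed.

Lemma prod_max1_fsetU1 A :
  \prod_(Y <- A | x \in Y) Num.max 1 (h Y) <=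
  \prod_(Y <- [fset x] |` A | x \in Y) Num.max 1 (h Y).
Proof.
have [xA|xNA] := boolP ([fset x] \in A).
  by rewrite (fsetUidPr _ _ _) ?fsub1set.
rewrite big_mkcond [leRHS]big_mkcond big_fsetU1 //= fset11 ler_peMl //.
  by apply: prodr_ge0 => Y _; case: ifP; rewrite // le_max ler01.
by rewrite le_max lexx.
Qed.

(* Only the factor at [{x}] can be below 1, so the infimum part of [eprod] is
   [min (h {x}) 1], and scaling the supremum part by it recovers the plain
   partial products over families containing [{x}]. *)
Lemma eprod_pointed :
  eprod (fun Y => x \in Y) (fun Y => (h Y)%:E) =
  ereal_sup [set (\prod_(Y <- A | x \in Y) h Y)%:E
            | A in [set A : {fset {fset T}} | [fset x] \in A]].
Proof.
have m_ge0 : 0 <= m by rewrite le_min h_ge0 ler01.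
have inf_m : ereal_inf [set (\prod_(Y <- A | x \in Y) Num.min (h Y) 1)%:E
                       | A in [set: {fset {fset T}}]] = m%:E.
  apply/le_anti/andP; split.
    by apply: ereal_inf_lbound; exists [fset [fset x]]; rewrite ?prod_min1 ?fset11.
  apply: le_ereal_inf_tmp => _ [A _ <-]; rewrite lee_fin prod_min1.
  by case: ifP; rewrite // ge_min lexx orbT.
have sup_pointed :
    ereal_sup [set (\prod_(Y <- A | x \in Y) Num.max 1 (h Y))%:E
              | A in [set: {fset {fset T}}]] =
    ereal_sup [set (\prod_(Y <- A | x \in Y) Num.max 1 (h Y))%:E
              | A in [set A : {fset {fset T}} | [fset x] \in A]].
  apply/le_anti/andP; split; last first.
    by apply: ereal_sup_le => _ [A _ <-]; exists A.
  apply: ge_ereal_sup => _ [A _ <-]; apply: le_ereal_sup_tmp.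
  exists (\prod_(Y <- [fset x] |` A | x \in Y) Num.max 1 (h Y))%:E.
    by exists ([fset x] |` A); rewrite //= fset1U1.
  by rewrite lee_fin prod_max1_fsetU1.
rewrite eprod_EFin inf_m sup_pointed -ereal_supZl //; last first.
  apply/set0P; exists (\prod_(Y <- [fset [fset x]] | x \in Y) Num.max 1 (h Y))%:E.
  by exists [fset [fset x]]; rewrite //= fset11.
rewrite image_comp; congr ereal_sup; apply: eq_imagel => A /= xA.
have -> : m = \prod_(Y <- A | x \in Y) Num.min (h Y) 1 by rewrite prod_min1 xA.
rewrite -EFinM -big_split; congr EFin; apply: eq_bigr => Y _.
by rewrite /= minElt maxElt; case: (ltgtP (h Y) 1); rewrite ?mulr1 ?mul1r.
Qed.

End PointedProduct.

Section DisjointUnion.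
Variable T : choiceType.
Implicit Types (Y B C : {fset T}) (A : {fset {fset T}}).

Lemma fsetUI_disjoint {Y B C} :
  Y `&` B = fset0 -> C `<=` B -> (Y `|` C) `&` B = C.
Proof. by move=> YB0 /fsetIidPl CB; rewrite fsetIUl YB0 fset0U CB. Qed.

Lemma fsetUD_disjoint {Y B C} :
  Y `&` B = fset0 -> C `<=` B -> (Y `|` C) `\` B = Y.
Proof.
move=> /eqP YB0 CB; have /eqP CB0 : C `\` B == fset0 by rewrite fsetD_eq0.
by rewrite fsetDUl CB0 fsetU0; apply/fsetDidPl; rewrite -fsetI_eq0.
Qed.

Lemma big_fpowerset_fsetU (R : Type) (idx : R) (op : Monoid.com_law idx)
    A B (F : {fset T} -> R) :
  (forall Y, Y \in A -> Y `&` B = fset0) ->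
  \big[op/idx]_(Y <- A) \big[op/idx]_(C <- fpowerset B) F (Y `|` C) =
  \big[op/idx]_(X <- [fset Y `|` C | Y in A, C in fpowerset B]) F X.
Proof.
move=> AB0; rewrite big_imfset2 //= => -[Y C] [Y' C'] /=.
rewrite !inE /= !fpowersetE => /andP[YA CB] /andP[Y'A C'B] YC_eq.
have [YB0 Y'B0] := (AB0 _ YA, AB0 _ Y'A).
have -> : Y = Y' by rewrite -(fsetUD_disjoint YB0 CB) YC_eq fsetUD_disjoint.
by rewrite -(fsetUI_disjoint YB0 CB) YC_eq fsetUI_disjoint.
Qed.

End DisjointUnion.

Section ConditionalInteraction.
Context {T : choiceType} {R : realType} {r : T -> R} {x : T}.
Context {W : {fset T} -> R[i]} {B : {fset T}}.
Hypothesis r_bounds : forall s, 0 <= r s < 1.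
Implicit Types (Y : {fset T}) (A : {fset {fset T}}).

Lemma maxfac_condW_le Y : x \notin B -> x \in Y ->
  maxfac r x Y (condW W Y B) <=
  if Y `&` B == fset0
  then \prod_(C <- fpowerset B) maxfac r x (Y `|` C) (W (Y `|` C)) else 1.
Proof.
move=> xNB xY; rewrite /condW; case: ifP => _.
  by apply: maxfac_prod_le => // C; apply: fsubsetUl.
have -> : has (fun y => Y == [fset y]) B = false.
  apply/hasP => -[y yB /eqP Yy]; move: xY; rewrite Yy inE => /eqP xy.
  by rewrite xy yB in xNB.
apply: maxfac_le => [|S _ _]; first by rewrite cabs1.
by rewrite subrr cabs0 mul0r addr0.
Qed.

Lemma maxfac_condW_fset1 :
  x \in B -> maxfac r x [fset x] (condW W [fset x] B) = 0.
Proof.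
move=> xB; apply/le_anti; rewrite maxfac_ge0 andbT /condW.
have /negPf -> : [fset x] `&` B != fset0.
  by apply/fset0Pn; exists x; rewrite in_fsetI fset11 xB.
have -> : has (fun y => [fset x] == [fset y]) B by apply/hasP; exists x.
apply: maxfac_le => [|S]; first by rewrite cabs0.
by rewrite fsetDv fsubset0 => /eqP->; rewrite eqxx.
Qed.

Lemma prod_maxfac_condW_le A : x \notin B -> [fset x] \in A ->
  exists2 A' : {fset {fset T}}, [fset x] \in A' &
    \prod_(Y <- A | x \in Y) maxfac r x Y (condW W Y B) <=
    \prod_(X <- A' | x \in X) maxfac r x X (W X).
Proof.
move=> xNB xA; set A1 := [fset Y in A | (x \in Y) && (Y `&` B == fset0)].
exists [fset Y `|` C | Y in A1, C in fpowerset B].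
  apply/imfset2P; exists [fset x].
    rewrite !inE /= xA eqxx fsetI_eq0 /=.
    by apply/fdisjointP => z; rewrite inE => /eqP->.
  by exists fset0; rewrite ?fsetU0 // fpowersetE fsub0set.
have xA1 : forall X, X \in [fset Y `|` C | Y in A1, C in fpowerset B] -> x \in X.
  move=> X /imfset2P[Y]; rewrite !inE => /andP[_ /andP[xY _]] [C _ ->].
  by rewrite inE xY.
rewrite [leRHS]big_seq_cond [leRHS](eq_bigl _ _ (fun X => andb_idr (@xA1 X))).
rewrite -big_seq -big_fpowerset_fsetU; last first.
  by move=> Y; rewrite !inE => /andP[_ /andP[_ /eqP]].
rewrite -big_fset_condE big_mkcondr /=; apply: ler_prod => Y xY.
by rewrite maxfac_ge0 maxfac_condW_le.
Qed.

End ConditionalInteraction.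

Theorem corollary4p7 (T : countType) (R : realType) (W : {fset T} -> R[i])
    (r : T -> R) (hr : forall s, 0 <= r s < 1) (x : T) (B : {fset T}) :
  (eprod (fun Y : {fset T} => x \in Y)
      (fun Y => (maxfac r x Y (condW W Y B))%:E)
   <= ((x \notin B)%:R)%:E *
      eprod (fun X : {fset T} => x \in X) (fun X => (maxfac r x X (W X))%:E))%E.
Proof.
rewrite !eprod_pointed; try by move=> Y; [exact: maxfac_ge0 || exact: maxfac_ge1].
have [xB|xNB] := boolP (x \in B); rewrite /= ?mul0e ?mul1e.
  apply: ge_ereal_sup => _ [A xA <-].
  by rewrite big_mkcond (big_fsetD1 _ xA) /= fset11 maxfac_condW_fset1 // mul0r.
apply: ge_ereal_sup => _ [A xA <-]; apply: le_ereal_sup_tmp.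
have [A' xA' prod_le] := prod_maxfac_condW_le (W := W) hr A xNB xA.
exists (\prod_(X <- A' | x \in X) maxfac r x X (W X))%:E; first by exists A'.
by rewrite lee_fin.
Qed.
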